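(* Let $e\ge1$ and let $Q$ be a generic binary quadratic form. Then for every integer $p$ with $0\le p\le e$, the transvectant $(Q^e,Q^e)_{2p}$ is not identically zero.
   Context: For binary forms $A,B$ in $(x_0,x_1)$ of degrees $a,b$ and $k\ge0$, $(A,B)_k=\frac{(a-k)!(b-k)!}{a!\,b!}\bigl[\Omega^kA(x_0,x_1)B(y_0,y_1)\bigr]_{\underline{y}:=\underline{x}}$, where $\Omega=\frac{\partial^2}{\partial x_0\partial y_1}-\frac{\partial^2}{\partial x_1\partial y_0}$. *)

From HB Require Import structures.
From mathcomp Require Import all_boot all_order all_algebra.
From mathcomp Require Import mpoly.
Set Implicit Arguments. Unset Strict Implicit. Unset Printing Implicit Defensive.
Import GRing.Theory.
Local Open Scope ring_scope.

(* Binary forms in (x0,x1) with coefficients in a commutative R-algebra K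
   (R a field) are elements of {mpoly K[2]}: 'X_0 = x0, 'X_1 = x1. *)

Section Transvectant.
Variables (R : fieldType) (K : comAlgType R).

Definition vx0 : 'I_4 := inord 0.
Definition vx1 : 'I_4 := inord 1.
Definition vy0 : 'I_4 := inord 2.
Definition vy1 : 'I_4 := inord 3.

Definition in_x (A : {mpoly K[2]}) : {mpoly K[4]} :=
  A \mPo [tuple 'X_vx0; 'X_vx1].
Definition in_y (B : {mpoly K[2]}) : {mpoly K[4]} :=
  B \mPo [tuple 'X_vy0; 'X_vy1].
Definition diag_xy (P : {mpoly K[4]}) : {mpoly K[2]} :=
  P \mPo [tuple 'X_(inord 0); 'X_(inord 1); 'X_(inord 0); 'X_(inord 1)].

Definition Omega (P : {mpoly K[4]}) : {mpoly K[4]} :=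
  mderiv vx0 (mderiv vy1 P) - mderiv vx1 (mderiv vy0 P).

Definition transvectant (a b : nat) (A B : {mpoly K[2]}) (k : nat)
  : {mpoly K[2]} :=
  ((((a - k)`! * (b - k)`!)%:R / (a`! * b`!)%:R : R)%:A : K)
    *: diag_xy (iter k Omega (in_x A * in_y B)).

End Transvectant.

(* The generic binary quadratic form
   Q = a x0^2 + 2 b x0 x1 + c x1^2, whose coefficients a, b, c are
   indeterminates, i.e. the variables 0,1,2 of {mpoly R[3]}. *)
Definition genericQ (R : fieldType) : {mpoly {mpoly R[3]}[2]} :=
  let a : {mpoly R[3]} := 'X_(inord 0) in
  let b : {mpoly R[3]} := 'X_(inord 1) in
  let c : {mpoly R[3]} := 'X_(inord 2) in
  let x0 : {mpoly {mpoly R[3]}[2]} := 'X_(inord 0) in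
  let x1 : {mpoly {mpoly R[3]}[2]} := 'X_(inord 1) in
  a%:MP * x0 ^+ 2 + (2%:R * b)%:MP * x0 * x1 + c%:MP * x1 ^+ 2.

(* Specialise the coefficients of Q to (a, b, c) = (1, 0, 1), so that Q
   becomes x0^2 + x1^2, and evaluate the transvectant at (x0, x1) = (1, 0).
   What remains is, up to a nonzero factor, the coefficient of x0^N y0^N,
   N = 2e - 2p, in Omega^(2p) (Q^e(x) Q^e(y)).  Expanding
   Omega^k = sum_j (-1)^j C(k, j) d_x0^(k-j) d_x1^j d_y0^j d_y1^(k-j),
   the j-th term involves the coefficient of x0^(2e-j) x1^j in
   (x0^2 + x1^2)^e, which vanishes unless j is even.  So every surviving
   term is a nonnegative integer, the term j = 0 is positive, and the sum
   is nonzero in characteristic 0. *)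

From HB Require Import structures.
From mathcomp Require Import all_boot all_order all_algebra.
From mathcomp Require Import mpoly zify.
Set Implicit Arguments. Unset Strict Implicit. Unset Printing Implicit Defensive.
Import GRing.Theory.
Local Open Scope ring_scope.

Lemma alt_binomial_sumS (K : pzRingType) (V : lmodType K) k (f : nat -> V) :
  \sum_(j < k.+1) ((-1) ^+ j *+ 'C(k, j)) *: f j
  - \sum_(j < k.+1) ((-1) ^+ j *+ 'C(k, j)) *: f j.+1
  = \sum_(j < k.+2) ((-1) ^+ j *+ 'C(k.+1, j)) *: f j.
Proof.
pose c j : K := (-1) ^+ j *+ 'C(k, j).
pose h j := if j is j'.+1 then - (c j' *: f j) else 0.
rewrite (eq_bigr (fun j : 'I_k.+2 => c j *: f j + h j)); last first.
  case=> [[|j] ?] _; rewrite /c /h /= ?bin0 ?addr0 //.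
  by rewrite binS mulrnDr scalerDl exprS mulN1r !mulNrn !scaleNr.
rewrite big_split /=; congr (_ + _).
  by rewrite [RHS]big_ord_recr /= /c bin_small // mulr0n scale0r addr0.
by rewrite [RHS]big_ord_recl /= add0r sumrN.
Qed.

Definition mnm2 (a b : nat) : 'X_{1..2} := [multinom [tuple a; b]].
Definition mnm4 (a b c d : nat) : 'X_{1..4} := [multinom [tuple a; b; c; d]].

Lemma mnm2E a b (i : 'I_2) : mnm2 a b i = nth 0%N [:: a; b] i.
Proof. by rewrite multinomE (tnth_nth 0%N). Qed.

Lemma mnm4E a b c d (i : 'I_4) : mnm4 a b c d i = nth 0%N [:: a; b; c; d] i.
Proof. by rewrite multinomE (tnth_nth 0%N). Qed.

Lemma ord2P (i : 'I_2) : i = inord 0 \/ i = inord 1.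
Proof. by case: i => [[|[|//]] ?]; [left | right]; apply: val_inj; rewrite /= inordK. Qed.

Lemma ord4P (i : 'I_4) : [\/ i = vx0, i = vx1, i = vy0 | i = vy1].
Proof.
by case: i => [[|[|[|[|//]]]] ?]; [constructor 1|constructor 2|constructor 3|constructor 4];
  apply: val_inj; rewrite /= inordK.
Qed.

Lemma mnm4_vx0 a b c d : mnm4 a b c d vx0 = a. Proof. by rewrite mnm4E inordK. Qed.
Lemma mnm4_vx1 a b c d : mnm4 a b c d vx1 = b. Proof. by rewrite mnm4E inordK. Qed.
Lemma mnm4_vy0 a b c d : mnm4 a b c d vy0 = c. Proof. by rewrite mnm4E inordK. Qed.
Lemma mnm4_vy1 a b c d : mnm4 a b c d vy1 = d. Proof. by rewrite mnm4E inordK. Qed.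
Definition mnm4_var := (mnm4_vx0, mnm4_vx1, mnm4_vy0, mnm4_vy1).

Lemma mnm2_eta (u : 'X_{1..2}) : u = mnm2 (u (inord 0)) (u (inord 1)).
Proof. by apply/mnmP => i; rewrite mnm2E; case: (ord2P i) => ->; rewrite inordK. Qed.

Lemma mnm4_eta (m : 'X_{1..4}) : m = mnm4 (m vx0) (m vx1) (m vy0) (m vy1).
Proof. by apply/mnmP => i; case: (ord4P i) => ->; rewrite mnm4_var. Qed.

Lemma eq_mnm2 a b a' b' : (mnm2 a b == mnm2 a' b') = (a == a') && (b == b').
Proof.
apply/eqP/andP => [e | [/eqP-> /eqP->] //].
by split; apply/eqP; [move/mnmP/(_ (inord 0)): e | move/mnmP/(_ (inord 1)): e];
  rewrite !mnm2E inordK.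
Qed.

Lemma eq_mnm4 a b c d a' b' c' d' :
  (mnm4 a b c d == mnm4 a' b' c' d') = [&& a == a', b == b', c == c' & d == d'].
Proof.
apply/eqP/and4P => [e | [/eqP-> /eqP-> /eqP-> /eqP->] //].
by split; apply/eqP; [move/mnmP/(_ vx0): e | move/mnmP/(_ vx1): e
  | move/mnmP/(_ vy0): e | move/mnmP/(_ vy1): e]; rewrite !mnm4_var.
Qed.

Lemma mnm4D a b c d a' b' c' d' :
  (mnm4 a b c d + mnm4 a' b' c' d' = mnm4 (a + a') (b + b') (c + c') (d + d'))%MM.
Proof. by apply/mnmP => i; rewrite mnmDE; case: (ord4P i) => ->; rewrite !mnm4_var. Qed.

Lemma mnm4_U a b c d : mnm4 a b c d =
  (U_(vx0) *+ a + U_(vx1) *+ b + U_(vy0) *+ c + U_(vy1) *+ d)%MM.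
Proof.
apply/mnmP => i; rewrite !mnmDE !mulmnE !mnm1E.
by case: (ord4P i) => ->; rewrite mnm4_var -!val_eqE /= !inordK //=; lia.
Qed.

Definition mffact n (m m' : 'X_{1..n}) : nat := \prod_(i < n) (m i) ^_ (m' i).

Lemma mffactD_gt0 n (m m' : 'X_{1..n}) : (0 < mffact (m + m') m)%N.
Proof. by apply: prodn_gt0 => i; rewrite ffact_gt0 mnmDE leq_addr. Qed.

Section OmegaCalculus.
Variables (R : fieldType) (K : comAlgType R).
Implicit Types (G : {mpoly K[4]}) (A B : {mpoly K[2]}).

Lemma Omega_mderivm G : Omega G = G^`M[mnm4 1 0 0 1] - G^`M[mnm4 0 1 1 0].
Proof.
by rewrite /Omega !mnm4_U !mulm0n !mulm1n !addm0 !add0m !mderivmDm !mderivmU1m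
  mderiv_comm [in X in _ - X]mderiv_comm.
Qed.

Lemma iter_Omega k G : iter k (@Omega R K) G =
  \sum_(j < k.+1) ((-1) ^+ j *+ 'C(k, j)) *: G^`M[mnm4 (k - j) j j (k - j)].
Proof.
elim: k => [|k IHk].
  by rewrite big_ord1 scale1r mnm4_U !mulm0n !addm0 mderivm0m.
rewrite iterS IHk Omega_mderivm !raddf_sum /=.
rewrite -(alt_binomial_sumS k (fun j => G^`M[mnm4 (k.+1 - j) j j (k.+1 - j)])).
rewrite sumrN; congr (_ - _); apply: eq_bigr => j _; rewrite linearZ /= -mderivmDm mnm4D.
  by rewrite !addn0 addn1 subSn // -ltnS.
by rewrite !addn0 !addn1 subSS.
Qed.

Lemma in_xX a b : in_x 'X_[mnm2 a b] = 'X_[mnm4 a b 0 0] :> {mpoly K[4]}.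
Proof.
rewrite /in_x comp_mpolyX !big_ord_recl big_ord0 mulr1 mnm4_U !mulm0n !addm0.
by rewrite mpolyXD -!mpolyXn.
Qed.

Lemma in_yX a b : in_y 'X_[mnm2 a b] = 'X_[mnm4 0 0 a b] :> {mpoly K[4]}.
Proof.
rewrite /in_y comp_mpolyX !big_ord_recl big_ord0 mulr1 mnm4_U !mulm0n !add0m.
by rewrite mpolyXD -!mpolyXn.
Qed.

Lemma mcoeff_in_xM_in_y A B a b c d :
  (in_x A * in_y B)@_(mnm4 a b c d) = A@_(mnm2 a b) * B@_(mnm2 c d).
Proof.
elim/mpolyind: A => [|x u A _ _ IHA].
  by rewrite /in_x comp_mpoly0 mul0r !mcoeff0 mul0r.
rewrite /in_x comp_mpolyD mulrDl !mcoeffD -/(in_x A) IHA mulrDl; congr (_ + _) => {IHA}.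
elim/mpolyind: B => [|y v B _ _ IHB].
  by rewrite /in_y comp_mpoly0 mulr0 !mcoeff0 mulr0.
rewrite /in_y comp_mpolyD mulrDr !mcoeffD -/(in_y B) IHB mulrDr; congr (_ + _) => {IHB}.
rewrite [u]mnm2_eta [v]mnm2_eta !comp_mpolyZ -/(in_x _) -/(in_y _) in_xX in_yX.
rewrite -scalerAl -scalerAr -mpolyXD mnm4D !mcoeffZ !mcoeffX eq_mnm4 !eq_mnm2 !addn0 !add0n.
by rewrite andbA -mulnb natrM mulrACA mulrA.
Qed.

Lemma mcoeff_iter_Omega_xy A B k a c :
  (iter k (@Omega R K) (in_x A * in_y B))@_(mnm4 a 0 c 0) =
  \sum_(j < k.+1) ((-1) ^+ j *+ 'C(k, j)) *
    (A@_(mnm2 (k - j + a) j) * B@_(mnm2 (j + c) (k - j))) *+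
    mffact (mnm4 (k - j) j j (k - j) + mnm4 a 0 c 0) (mnm4 (k - j) j j (k - j)).
Proof.
rewrite iter_Omega raddf_sum; apply: eq_bigr => j _.
by rewrite /= mcoeffZ mcoeff_mderivm -mulrnAr {1}mnm4D !addn0 mcoeff_in_xM_in_y.
Qed.

End OmegaCalculus.

Lemma mcoeff_sum_sq_exp (R : comRingType) e a b :
  (('X_(inord 0) ^+ 2 + 'X_(inord 1) ^+ 2) ^+ e : {mpoly R[2]})@_(mnm2 a b) =
  if ((a + b == 2 * e)%N && ~~ odd b) then 'C(e, b./2)%:R else 0.
Proof.
rewrite exprDn raddf_sum /=.
have term (i : 'I_e.+1) : ('X_(inord 0) ^+ 2 ^+ (e - i) * 'X_(inord 1) ^+ 2 ^+ i
    *+ 'C(e, i) : {mpoly R[2]})@_(mnm2 a b)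
    = ((a == (e - i).*2) && (b == i.*2))%:R *+ 'C(e, i).
  rewrite !mpolyXn -mpolyXD mcoeffMn mcoeffX [X in (X == _)]mnm2_eta eq_mnm2.
  rewrite !mnmDE !mulmnE !mnm1E -!val_eqE /= !inordK //=.
  by rewrite !mul1n !mul0n add0n addn0 !mul2n ![_ == a]eq_sym ![_ == b]eq_sym.
under eq_bigr do rewrite term.
have b_half := odd_double_half b.
case: ifP => [/andP[/eqP ab_e /negbTE b_even] | no_term].
  rewrite b_even add0n in b_half.
  have lt_half : (b./2 < e.+1)%N by lia.
  rewrite (bigD1 (Ordinal lt_half)) //= big1 ?addr0 => [|i /eqP ne_i].
    by have -> : (a == (e - b./2).*2) && (b == b./2.*2) by apply/andP; split; apply/eqP; lia.
  case: andP => [[_ /eqP b_i]|]; last by rewrite mul0rn.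
  by case: ne_i; apply: val_inj => /=; lia.
apply: big1 => i _; case: andP => [[/eqP a_i /eqP b_i]|]; last by rewrite mul0rn.
by move: no_term; rewrite b_i odd_double andbT => /negbT/eqP; have := ltn_ord i; lia.
Qed.

Section SumOfSquaresSpecialization.
Variable R : fieldType.

Definition coeffs_sum_sq (i : 'I_3) : R := (i != 1%N :> nat)%:R.
Local Notation spec := (meval coeffs_sum_sq).

Lemma map_genericQ_sum_sq :
  map_mpoly spec (genericQ R) = 'X_(inord 0) ^+ 2 + 'X_(inord 1) ^+ 2.
Proof.
rewrite /genericQ !rmorphD !rmorphM /= !map_mpolyC !map_mpolyX /= (rmorph_nat spec 2).
rewrite !mevalXU /coeffs_sum_sq !inordK //= mulr0n !mulr1n mpolyC0 mpolyC1.
by rewrite mulr0 !mul0r !mul1r addr0 -!expr2.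
Qed.

Lemma spec_mcoeff_genericQ_exp e a b :
  spec ((genericQ R ^+ e)@_(mnm2 a b)) =
  if ((a + b == 2 * e)%N && ~~ odd b) then 'C(e, b./2)%:R else 0.
Proof. by rewrite -mcoeff_map_mpoly rmorphXn /= map_genericQ_sum_sq mcoeff_sum_sq_exp. Qed.

End SumOfSquaresSpecialization.

(* [fun i => (~~ odd i)%:R] is the point x0 = y0 = 1, x1 = y1 = 0. *)
Lemma meval_diag_xy_even (R : fieldType) (K : comAlgType R) (P : {mpoly K[4]}) :
  (diag_xy P).@[fun i : 'I_2 => (~~ odd i)%:R] = P.@[fun i : 'I_4 => (~~ odd i)%:R].
Proof.
rewrite /diag_xy comp_mpoly_meval; apply: meval_eq => i.
by case: (ord4P i) => ->; rewrite (tnth_nth 0) !inordK //= mevalXU inordK.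
Qed.

Lemma meval_even (K : comRingType) (P : {mpoly K[4]}) :
  P.@[fun i => (~~ odd i)%:R] =
  \sum_(m <- msupp P | (m vx1 == 0%N) && (m vy1 == 0%N)) P@_m.
Proof.
rewrite mevalE [RHS]big_mkcond; apply: eq_bigr => m _.
rewrite (bigD1 vx1) // (bigD1 vy1) /=; last by rewrite -val_eqE /= !inordK.
rewrite big1 => [|i /andP[ne_i1 ne_i3]].
  rewrite !inordK //= !expr0n mulr1.
  by case: (m vx1 == 0%N); case: (m vy1 == 0%N); rewrite ?mulr1 ?mulr0.
by case: (ord4P i) ne_i1 ne_i3 => ->; rewrite ?eqxx // inordK //= => _ _; rewrite expr1n.
Qed.

Lemma sum_msupp_mcoeff1 (K : comRingType) (V : zmodType) n (P : {mpoly K[n]})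
    (f : {additive K -> V}) (Q : pred 'X_{1..n}) m0 :
  Q m0 -> (forall m, Q m -> m != m0 -> f P@_m = 0) ->
  \sum_(m <- msupp P | Q m) f P@_m = f P@_m0.
Proof.
move=> Q_m0 f_eq0; have [m0_in | m0_out] := boolP (m0 \in msupp P).
  rewrite -big_filter (bigD1_seq m0) ?filter_uniq ?msupp_uniq ?mem_filter ?Q_m0 //=.
  rewrite big1_seq ?addr0 // => m /andP[ne_m0]; rewrite mem_filter => /andP[Q_m _].
  exact: f_eq0.
rewrite (memN_msupp_eq0 m0_out) raddf0 big1_seq // => m /andP[Q_m m_in].
by apply: f_eq0 => //; apply: contraNneq m0_out => <-.
Qed.

Section OmegaPowerCoefficients.
Variables (R : fieldType) (e : nat).
Local Notation spec := (meval (@coeffs_sum_sq R)).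
Local Notation G k :=
  (iter k (@Omega R _) (in_x (genericQ R ^+ e) * in_y (genericQ R ^+ e))).

Lemma spec_mcoeff_iter_Omega_eq0 k a c : (a + k != 2 * e)%N || (c + k != 2 * e)%N ->
  spec ((G k)@_(mnm4 a 0 c 0)) = 0.
Proof.
move=> off_degree; rewrite mcoeff_iter_Omega_xy rmorph_sum; apply: big1 => j _.
have le_jk : (j <= k)%N by rewrite -ltnS.
rewrite rmorphMn !rmorphM /= !spec_mcoeff_genericQ_exp.
have -> : (k - j + a + j = a + k)%N by lia.
have -> : (j + c + (k - j) = c + k)%N by lia.
by case/orP: off_degree => /negbTE->; rewrite ?mul0r ?mulr0 mul0rn.
Qed.

Lemma spec_meval_even_iter_Omega p : (p <= e)%N ->
  spec ((G (2 * p)).@[fun i => (~~ odd i)%:R]) =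
  spec ((G (2 * p))@_(mnm4 (2 * e - 2 * p) 0 (2 * e - 2 * p) 0)).
Proof.
move=> le_pe; rewrite meval_even rmorph_sum /=.
apply: sum_msupp_mcoeff1 => [|m /andP[/eqP m_x1 /eqP m_y1] ne_m]; first by rewrite !mnm4_var.
rewrite [m]mnm4_eta m_x1 m_y1; apply: spec_mcoeff_iter_Omega_eq0.
apply: contraNT ne_m; rewrite negb_or !negbK => /andP[/eqP x0_deg /eqP y0_deg].
by apply/eqP; rewrite [m]mnm4_eta m_x1 m_y1; congr mnm4; lia.
Qed.

Hypothesis charR0 : [pchar R] =i pred0.

Lemma natr_neq0 n : (0 < n)%N -> n%:R != 0 :> R.
Proof. by rewrite ((pcharf0P R).1 charR0) -lt0n. Qed.

Lemma spec_mcoeff_iter_Omega_neq0 p : (p <= e)%N ->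
  spec ((G (2 * p))@_(mnm4 (2 * e - 2 * p) 0 (2 * e - 2 * p) 0)) != 0.
Proof.
move=> le_pe; set N := (2 * e - 2 * p)%N.
pose M j := mnm4 (2 * p - j) j j (2 * p - j).
rewrite mcoeff_iter_Omega_xy rmorph_sum -/(M _) (eq_bigr (fun j : 'I_(2 * p).+1 =>
  (~~ odd j * ('C(2 * p, j) * 'C(e, j./2) * 'C(e, (2 * p - j)./2)
   * mffact (M j + mnm4 N 0 N 0) (M j)))%:R)) => [|j _].
  rewrite -natr_sum natr_neq0 // big_ord_recl ltn_addr //= !muln_gt0 mffactD_gt0.
  by rewrite !bin_gt0 subn0 mul2n doubleK le_pe.
have le_j2p : (j <= 2 * p)%N by rewrite -ltnS.
rewrite rmorphMn !rmorphM /= !spec_mcoeff_genericQ_exp rmorphMn rmorphXn rmorphN1.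
have -> : (2 * p - j + N + j = 2 * e)%N by lia.
have -> : (j + N + (2 * p - j) = 2 * e)%N by lia.
rewrite oddB // [odd (2 * p)]oddM eqxx -signr_odd /= -/(M _).
by case: (odd j) => /=; rewrite ?mul0r ?mulr0 ?mul0rn // !mul1r expr0 mulrA -mulr_natr.
Qed.

End OmegaPowerCoefficients.

Theorem mainTheorem8 (R : fieldType) (charR0 : [pchar R] =i pred0)
  (e : nat) (he : (1 <= e)%N) (p : nat) (hp : (p <= e)%N) :
  transvectant (2 * e) (2 * e) (genericQ R ^+ e) (genericQ R ^+ e) (2 * p)
    != 0.
Proof.
rewrite /transvectant; set r := (_ / _ : R).
have r_neq0 : r != 0.
  by rewrite mulf_neq0 ?invr_eq0 ?natr_neq0 // muln_gt0 fact_gt0.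
apply/eqP => /(congr1 (fun P => meval (@coeffs_sum_sq R) P.@[fun i => (~~ odd i)%:R])).
rewrite mevalZ rmorphM /= meval_diag_xy_even spec_meval_even_iter_Omega // mevalZ meval1 mulr1.
rewrite meval0 rmorph0; apply/eqP.
by rewrite mulf_neq0 ?spec_mcoeff_iter_Omega_neq0.
Qed.
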